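(* Let $P=\{p_1,\dots,p_n\}\subset\mathbb{R}^d$, and let $1\le l\le k$ be integers. Let $P^{(l)}$ be the colored multiset obtained by taking, for each $i$, $l$ copies $p_i^1,\dots,p_i^l$ of $p_i$, all of color $i$. Then for any $\lambda\ge1$ and any $k$ points $\mathcal{C}=\{c_1,\dots,c_k\}\subset\mathbb{R}^d$: $\mathcal{C}$ is a $\lambda$-approximate solution of $(l,k)$-FMeans on $P$ if and only if $\mathcal{C}$, used as the $k$ centers, induces a $\lambda$-approximate solution of $k$-ChMeans on $P^{(l)}$.
   Context: Fault tolerant $k$-means, $(l,k)$-FMeans: find $k$ points $\mathcal{C}\subset\mathbb{R}^d$ minimizing $\frac1n\sum_{i=1}^n$ (sum of the squared distances from $p_i$ to its $l$ nearest points of $\mathcal{C}$); $\mathcal{C}$ is $\lambda$-approximate if its cost is at most $\lambda$ times the minimum. Chromatic $k$-means, $k$-ChMeans, on a colored multiset $Q$ of $N$ points: partition $Q$ into $k$ clusters with no two points of the same color in the same cluster, minimizing $\frac1N\sum_j\sum_{q\in S_j}\|q-m(S_j)\|^2$ ($m(S_j)$ the mean). The $k$-ChMeans cost induced by centers $c_1,\dots,c_k$ is the minimum, over all assignments of the points of $Q$ to centers such that no two points of the same color go to the same center, of $\frac1N\sum_{q}\|q-c_{\text{assigned}(q)}\|^2$; it induces a $\lambda$-approximate solution if this cost is at most $\lambda$ times the optimal $k$-ChMeans value of $Q$. *)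

From HB Require Import structures.
From mathcomp Require Import all_boot all_order all_algebra.
From mathcomp Require Import boolp classical_sets reals.
Set Implicit Arguments. Unset Strict Implicit. Unset Printing Implicit Defensive.
Import Order.TTheory GRing.Theory Num.Theory.
Local Open Scope ring_scope.
Local Open Scope classical_set_scope.

Section Defs.
Variables (R : realType) (d : nat).

Definition sqdist (x y : 'rV[R]_d) : R := \sum_(i < d) (x ord0 i - y ord0 i) ^+ 2.

(* sum of squared distances from x to its l nearest points among the k centers
   (counted with multiplicity: minimum over l-element index sets of centers) *)
Definition l_nearest_cost (l k : nat) (C : 'I_k -> 'rV[R]_d) (x : 'rV[R]_d) : R :=
  inf [set s | exists S : {set 'I_k}, #|S| = l /\ s = \sum_(j in S) sqdist x (C j)].

Definition fmeans_cost (n l k : nat) (P : 'I_n -> 'rV[R]_d) (C : 'I_k -> 'rV[R]_d) : R :=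
  (n%:R)^-1 * \sum_(i < n) l_nearest_cost l C (P i).

Definition fmeans_opt (n l k : nat) (P : 'I_n -> 'rV[R]_d) : R :=
  inf [set s | exists C : 'I_k -> 'rV[R]_d, s = fmeans_cost l P C].

Definition fmeans_approx (n l k : nat) (P : 'I_n -> 'rV[R]_d) (C : 'I_k -> 'rV[R]_d)
    (lam : R) : Prop :=
  fmeans_cost l P C <= lam * fmeans_opt l k P.

(* a colored multiset Q: elements indexed by a finite type T, with positions q
   and colors col; N = #|T|. *)
Variables (T : finType) (Col : eqType) (q : T -> 'rV[R]_d) (col : T -> Col).

Definition chromatic (k : nat) (a : T -> 'I_k) : Prop :=
  forall x y, x != y -> col x = col y -> a x != a y.

Definition mean (S : {set T}) : 'rV[R]_d := (#|S|%:R)^-1 *: \sum_(x in S) q x.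

Definition cluster (k : nat) (a : T -> 'I_k) (j : 'I_k) : {set T} := [set x | a x == j].

Definition chmeans_part_cost (k : nat) (a : T -> 'I_k) : R :=
  (#|T|%:R)^-1 * \sum_(j < k) \sum_(x in cluster a j) sqdist (q x) (mean (cluster a j)).

Definition chmeans_opt (k : nat) : R :=
  inf [set s | exists a : T -> 'I_k, chromatic a /\ s = chmeans_part_cost a].

Definition chmeans_induced_cost (k : nat) (C : 'I_k -> 'rV[R]_d) : R :=
  inf [set s | exists a : T -> 'I_k, chromatic a /\
                 s = (#|T|%:R)^-1 * \sum_(x : T) sqdist (q x) (C (a x))].

Definition chmeans_induced_approx (k : nat) (C : 'I_k -> 'rV[R]_d) (lam : R) : Prop :=
  chmeans_induced_cost C <= lam * chmeans_opt k.

End Defs.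

(* P^(l): for each i, l copies p_i^1..p_i^l of p_i, all of color i *)
Definition rep_points (R : realType) (d n l : nat) (P : 'I_n -> 'rV[R]_d)
  : ('I_n * 'I_l)%type -> 'rV[R]_d := fun x => P x.1.
Definition rep_color (n l : nat) : ('I_n * 'I_l)%type -> 'I_n := fun x => x.1.

From HB Require Import structures.
From mathcomp Require Import all_boot all_order all_algebra.
From mathcomp Require Import boolp classical_sets reals.
From mathcomp Require Import ring.
Import Order.TTheory GRing.Theory Num.Theory.
Set Implicit Arguments. Unset Strict Implicit. Unset Printing Implicit Defensive.
Local Open Scope ring_scope.

(* The color constraint on P^(l) says exactly that the l copies of p_i go to
   l distinct centers, so for fixed centers the best chromatic assignment sends
   them to the l nearest ones: the induced k-ChMeans cost is the (l,k)-FMeans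
   cost divided by l.  For a fixed partition the cluster means are the best
   centers, so the optimal k-ChMeans cost is the best induced cost, i.e. the
   optimal (l,k)-FMeans cost divided by l.  Both sides of the approximation
   inequality are thus scaled by the same factor 1/l. *)

Section Infimum.
Variable R : realType.

Lemma inf_eq_min (A : set R) (x : R) : A x -> lbound A x -> inf A = x.
Proof.
move=> Ax xlb; apply/le_anti; rewrite (ge_inf (ex_intro _ x xlb) Ax) /=.
by apply: lb_le_inf => //; exists x.
Qed.

Lemma inf_scale (T : Type) (t0 : T) (c : R) (f g : T -> R) :
  0 < c -> (forall t, 0 <= f t) -> (forall t, g t = c * f t) ->
  inf [set s | exists t, s = g t] = c * inf [set s | exists t, s = f t].
Proof.
move=> c_gt0 f_ge0 gE.
have lbF : has_lbound [set s | exists t, s = f t].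
  by exists 0 => _ [t ->]; exact: f_ge0.
have lbG : has_lbound [set s | exists t, s = g t].
  exists 0 => _ [t ->]; rewrite gE.
  by apply: mulr_ge0; [exact: ltW | exact: f_ge0].
apply/le_anti/andP; split.
- rewrite -ler_pdivrMl //; apply: lb_le_inf; first by exists (f t0), t0.
  move=> _ [t ->]; rewrite ler_pdivrMl // -gE.
  by apply: ge_inf => //; exists t.
- apply: lb_le_inf; first by exists (g t0), t0.
  move=> _ [t ->]; rewrite gE; apply: ler_wpM2l; first exact: ltW.
  by apply: ge_inf => //; exists t.
Qed.

End Infimum.

Section SquaredDistance.
Variables (R : realType) (d : nat).

Lemma sqdist_ge0 (x y : 'rV[R]_d) : 0 <= sqdist x y.
Proof. by apply: sumr_ge0 => i _; exact: sqr_ge0. Qed.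

Variables (T : finType) (q : T -> 'rV[R]_d).

Lemma sum_sub_mean (S : {set T}) (i : 'I_d) :
  \sum_(x in S) (q x ord0 i - mean q S ord0 i) = 0.
Proof.
rewrite sumrB sumr_const /mean !mxE summxE.
have [/eqP|S_neq0] := eqVneq #|S| 0%N.
  by rewrite cards_eq0 => /eqP ->; rewrite big_set0 cards0 mulr0n subr0.
by rewrite -[_ *+ #|S|]mulr_natl mulrA mulfV ?mul1r ?subrr // pnatr_eq0.
Qed.

Lemma sqdist_mean_min (S : {set T}) (c : 'rV[R]_d) :
  \sum_(x in S) sqdist (q x) (mean q S) <= \sum_(x in S) sqdist (q x) c.
Proof.
rewrite /sqdist exchange_big [leRHS]exchange_big /=; apply: ler_sum => i _.
set m := mean q S ord0 i.
(* Pythagoras: the cross term vanishes as deviations from the mean sum to 0 *)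
have -> : \sum_(x in S) (q x ord0 i - c ord0 i) ^+ 2 =
    \sum_(x in S) (q x ord0 i - m) ^+ 2
    + 2 * (m - c ord0 i) * \sum_(x in S) (q x ord0 i - m)
    + \sum_(x in S) (m - c ord0 i) ^+ 2.
  rewrite mulr_sumr -!big_split /=; apply: eq_bigr => x _; ring.
rewrite sum_sub_mean mulr0 addr0 lerDl.
by apply: sumr_ge0 => x _; exact: sqr_ge0.
Qed.

End SquaredDistance.

Lemma widen_ord_inj (m n : nat) (le_mn : (m <= n)%N) :
  injective (widen_ord le_mn).
Proof. by move=> i j [] /val_inj. Qed.

Lemma set_enum_inj (T : finType) (S : {set T}) (l : nat) : #|S| = l ->
  exists2 f : 'I_l -> T, injective f & S = [set f t | t in 'I_l].
Proof.
move=> cardS; pose f t := enum_val (cast_ord (esym cardS) t).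
have f_inj : injective f by move=> t t' /enum_val_inj /cast_ord_inj.
exists f => //; apply/eqP; rewrite eq_sym eqEcard card_imset // card_ord cardS.
rewrite leqnn andbT; apply/fintype.subsetP => _ /imsetP [t _ ->].
exact: enum_valP.
Qed.

Section LNearestCost.
Variables (R : realType) (d l k : nat) (C : 'I_k -> 'rV[R]_d) (x : 'rV[R]_d).

Lemma l_nearest_cost_le_set (S : {set 'I_k}) :
  #|S| = l -> l_nearest_cost l C x <= \sum_(j in S) sqdist x (C j).
Proof.
move=> cardS; apply: ge_inf; last by exists S.
by exists 0 => _ [S' [_ ->]]; apply: sumr_ge0 => j _; exact: sqdist_ge0.
Qed.

Lemma l_nearest_cost_le_inj (f : 'I_l -> 'I_k) :
  injective f -> l_nearest_cost l C x <= \sum_(t < l) sqdist x (C (f t)).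
Proof.
move=> f_inj; rewrite -(big_imset (fun j => sqdist x (C j))) /=; last first.
  by move=> t t' _ _; exact: f_inj.
by apply: l_nearest_cost_le_set; rewrite card_imset // card_ord.
Qed.

Lemma l_nearest_cost_attained : (l <= k)%N ->
  exists f : 'I_l -> 'I_k, injective f /\
    l_nearest_cost l C x = \sum_(t < l) sqdist x (C (f t)).
Proof.
move=> l_le_k; pose cost (S : {set 'I_k}) := \sum_(j in S) sqdist x (C j).
have card_widen : #|[set widen_ord l_le_k t | t in 'I_l]| == l.
  by rewrite card_imset ?card_ord //; exact: widen_ord_inj.
have [S /eqP cardS S_min] :=
  arg_minP (P := fun S : {set _} => #|S| == l) cost card_widen.
have [f f_inj SE] := set_enum_inj cardS.
have sumS : \sum_(j in S) sqdist x (C j) = \sum_(t < l) sqdist x (C (f t)).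
  by rewrite SE big_imset // => t t' _ _; exact: f_inj.
exists f; split => //; rewrite -sumS.
apply: inf_eq_min; first by exists S.
by move=> _ [S' [/eqP cardS' ->]]; exact: S_min.
Qed.

Lemma l_nearest_cost_ge0 : (l <= k)%N -> 0 <= l_nearest_cost l C x.
Proof.
move=> /l_nearest_cost_attained [f [_ ->]].
by apply: sumr_ge0 => t _; exact: sqdist_ge0.
Qed.

End LNearestCost.

Lemma fmeans_cost_ge0 (R : realType) (d n l k : nat) (P : 'I_n -> 'rV[R]_d)
    (C : 'I_k -> 'rV[R]_d) :
  (l <= k)%N -> 0 <= fmeans_cost l P C.
Proof.
move=> l_le_k; apply: mulr_ge0; first by rewrite invr_ge0 ler0n.
by apply: sumr_ge0 => i _; exact: l_nearest_cost_ge0.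
Qed.

Section ChromaticKMeans.
Variables (R : realType) (d : nat) (T : finType) (Col : eqType).
Variables (q : T -> 'rV[R]_d) (col : T -> Col) (k : nat).

Definition center_cost (C : 'I_k -> 'rV[R]_d) (a : T -> 'I_k) : R :=
  (#|T|%:R)^-1 * \sum_(x : T) sqdist (q x) (C (a x)).

Lemma center_cost_ge0 C a : 0 <= center_cost C a.
Proof.
apply: mulr_ge0; first by rewrite invr_ge0 ler0n.
by apply: sumr_ge0 => x _; exact: sqdist_ge0.
Qed.

Lemma chmeans_induced_costE C :
  chmeans_induced_cost q col C =
  inf [set s | exists a, chromatic col a /\ s = center_cost C a].
Proof. by []. Qed.

Lemma sum_cluster (a : T -> 'I_k) (G : T -> 'I_k -> R) :
  \sum_(j < k) \sum_(x in cluster a j) G x j = \sum_(x : T) G x (a x).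
Proof.
rewrite (partition_big a predT) //=; apply: eq_bigr => j _.
by apply: eq_big => x; rewrite inE // => /eqP ->.
Qed.

Lemma chmeans_part_cost_le (a : T -> 'I_k) C :
  chmeans_part_cost q a <= center_cost C a.
Proof.
rewrite /chmeans_part_cost /center_cost.
rewrite -(sum_cluster a (fun x j => sqdist (q x) (C j))).
apply: ler_wpM2l; first by rewrite invr_ge0 ler0n.
by apply: ler_sum => j _; exact: sqdist_mean_min.
Qed.

Lemma chmeans_part_cost_means (a : T -> 'I_k) :
  chmeans_part_cost q a = center_cost (fun j => mean q (cluster a j)) a.
Proof.
rewrite /center_cost.
by rewrite -(sum_cluster a (fun x j => sqdist (q x) (mean q (cluster a j)))).
Qed.

Lemma chmeans_opt_induced : (exists a : T -> 'I_k, chromatic col a) ->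
  chmeans_opt q col k =
  inf [set s | exists C : 'I_k -> 'rV[R]_d, s = chmeans_induced_cost q col C].
Proof.
move=> [a0 a0_chrom].
have part_lb : has_lbound
    [set s | exists a : T -> 'I_k, chromatic col a /\ s = chmeans_part_cost q a].
  by exists 0 => _ [a [_ ->]]; rewrite chmeans_part_cost_means center_cost_ge0.
have induced_lb C :
    lbound [set s | exists a, chromatic col a /\ s = center_cost C a] 0.
  by move=> _ [a [_ ->]]; exact: center_cost_ge0.
apply/le_anti/andP; split.
- pose C0 : 'I_k -> 'rV[R]_d := fun=> 0.
  apply: lb_le_inf; first by exists (chmeans_induced_cost q col C0), C0.
  move=> _ [C ->]; apply: lb_le_inf; first by exists (center_cost C a0), a0.
  move=> _ [a [a_chrom ->]]; apply: le_trans (chmeans_part_cost_le a C).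
  by apply: ge_inf => //; exists a.
- apply: lb_le_inf; first by exists (chmeans_part_cost q a0), a0.
  move=> _ [a [a_chrom ->]]; rewrite chmeans_part_cost_means.
  set means := fun j => mean q (cluster a j).
  apply: (@le_trans _ _ (chmeans_induced_cost q col means)).
    apply: ge_inf; last by eexists.
    exists 0 => _ [C ->]; apply: lb_le_inf; last exact: induced_lb.
    by exists (center_cost C a0), a0.
  by apply: (ge_inf (ex_intro _ 0 (induced_lb _))); exists a.
Qed.

End ChromaticKMeans.

Section ReplicatedPoints.
Variables (R : realType) (d n l k : nat) (P : 'I_n -> 'rV[R]_d).

Notation q := (rep_points P).
Notation col := (@rep_color n l).

Lemma chromatic_rep_colorP (a : 'I_n * 'I_l -> 'I_k) :
  chromatic col a <-> forall i, injective (fun t => a (i, t)).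
Proof.
split=> [a_chrom i t t' eq_a | a_inj [i t] [i' t'] neq /= eq_i].
  apply/eqP; apply/negPn/negP => neq_t.
  have /a_chrom : (i, t) != (i, t') by rewrite xpair_eqE negb_and neq_t orbT.
  by move=> /(_ erefl); rewrite eq_a eqxx.
rewrite /rep_color /= in eq_i; subst i'.
by apply: contra neq => /eqP /a_inj ->.
Qed.

Lemma center_cost_rep (C : 'I_k -> 'rV[R]_d) (a : 'I_n * 'I_l -> 'I_k) :
  center_cost q C a =
  (l%:R)^-1 *
  ((n%:R)^-1 * \sum_(i < n) \sum_(t < l) sqdist (P i) (C (a (i, t)))).
Proof.
rewrite /center_cost card_prod !card_ord natrM invfM [_^-1 * _^-1]mulrC -mulrA.
rewrite (pair_bigA _ (fun i t => sqdist (P i) (C (a (i, t))))).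
by do 2 congr (_ * _); apply: eq_bigr => -[].
Qed.

Hypothesis l_le_k : (l <= k)%N.

Lemma chmeans_induced_cost_rep (C : 'I_k -> 'rV[R]_d) :
  chmeans_induced_cost q col C = (l%:R)^-1 * fmeans_cost l P C.
Proof.
have [F F_opt] := choice (fun i => l_nearest_cost_attained C (P i) l_le_k).
rewrite chmeans_induced_costE; apply: inf_eq_min.
  exists (fun x => F x.1 x.2); split.
    by apply/chromatic_rep_colorP => i; exact: (F_opt i).1.
  rewrite center_cost_rep /fmeans_cost; do 2 congr (_ * _).
  by apply: eq_bigr => i _; rewrite (F_opt i).2.
move=> _ [a [/chromatic_rep_colorP a_inj ->]]; rewrite center_cost_rep.
do 2 (apply: ler_wpM2l; first by rewrite invr_ge0 ler0n).
by apply: ler_sum => i _; exact: l_nearest_cost_le_inj.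
Qed.

Lemma chmeans_opt_rep : (0 < l)%N ->
  chmeans_opt q col k = (l%:R)^-1 * fmeans_opt l k P.
Proof.
move=> l_gt0; rewrite chmeans_opt_induced.
  apply: (inf_scale (fun _ : 'I_k => 0 : 'rV[R]_d)).
  - by rewrite invr_gt0 ltr0n.
  - by move=> C; exact: fmeans_cost_ge0.
  - exact: chmeans_induced_cost_rep.
exists (fun x => widen_ord l_le_k x.2).
by apply/chromatic_rep_colorP => i; exact: widen_ord_inj.
Qed.

End ReplicatedPoints.

Theorem lemma9 (R : realType) (d n l k : nat) (P : 'I_n -> 'rV[R]_d) :
  (1 <= l)%N -> (l <= k)%N ->
  forall (lam : R), 1 <= lam ->
  forall C : 'I_k -> 'rV[R]_d,
    @fmeans_approx R d n l k P C lam <->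
    @chmeans_induced_approx R d ('I_n * 'I_l)%type 'I_n
      (@rep_points R d n l P) (@rep_color n l) k C lam.
Proof.
move=> l_gt0 l_le_k lam _ C.
rewrite /fmeans_approx /chmeans_induced_approx.
rewrite chmeans_induced_cost_rep // chmeans_opt_rep // [lam * (_ * _)]mulrCA.
by rewrite ler_pM2l // invr_gt0 ltr0n.
Qed.
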